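(* Let $r\in\mathbb N$, $k\in\mathbb Z$ with $0\le k\le r$, and suppose Assumption (A1) holds. Then the mapping $$\hat\psi\mapsto \sum_{i=0}^{\lfloor (k-1)/2\rfloor-1}\|\hat\psi^{(i)}(-1)\|+\sum_{i=0}^{\lfloor k/2\rfloor-1}\|\hat\psi^{(i)}(1)\|+\sum_{i=\delta_{0,k}}^{r-k}\Big\|\widehat{\mathscr I}\big[\hat\psi(\hat t)(1+\hat t)^i\big]\Big\|$$ defines a norm on $P_{r-1}([-1,1],\mathbb R^d)$.
   Context: $\|\cdot\|$ is the Euclidean norm on $\mathbb R^d$; $P_s([-1,1],\mathbb R^d)$ denotes $\mathbb R^d$-valued polynomials of degree at most $s$; $\delta_{i,j}$ is the Kronecker symbol; empty sums are zero. $\widehat{\mathscr I}$ is a linear functional (reference integrator) defined on $C^{k_{\mathscr I}}([-1,1])$, acting componentwise on vector-valued functions. Assumption (A1): whenever $\hat\psi\in P_{r-\max\{1,k\}}([-1,1])$ satisfies $\widehat{\mathscr I}\big[(1-\hat t)^{\lfloor k/2\rfloor}(1+\hat t)^{|\lfloor (k-1)/2\rfloor|}\hat\psi\,\hat\varphi\big]=0$ for all $\hat\varphi\in P_{r-\max\{1,k\}}([-1,1])$, then $\hat\psi\equiv0$. *)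

From HB Require Import structures.
From mathcomp Require Import all_boot all_order all_algebra.
From mathcomp Require Import reals.
Set Implicit Arguments. Unset Strict Implicit. Unset Printing Implicit Defensive.
Import Order.TTheory GRing.Theory Num.Theory.
Local Open Scope ring_scope.

(* positive part of an integer, as a nat: used so that a sum
   \sum_{i=0}^{m-1} with m <= 0 is empty *)
Definition pos_part (m : int) : nat :=
  match m with Posz n => n | Negz _ => 0%N end.

(* floor((k-1)/2) and floor(k/2) for k : nat, as integers (intdiv's %/ is
   floor division for positive divisors) *)
Definition flm1 (k : nat) : int := ((k%:Z - 1) %/ 2)%Z.
Definition fl0 (k : nat) : int := (k%:Z %/ 2)%Z.

Section Defs.
Variable R : realType.

(* p \in P_s([-1,1]) : degree at most s (s may be negative: then p = 0) *)
Definition inP (s : int) (p : {poly R}) : Prop := (size p)%:Z <= s + 1.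

Definition enorm (d : nat) (v : 'I_d -> R) : R := Num.sqrt (\sum_(j < d) v j ^+ 2).

Definition A1 (I : {poly R} -> R) (r k : nat) : Prop :=
  let s := r%:Z - (Num.max 1 k%:Z) in
  let w := ((1 - 'X) ^+ pos_part (fl0 k)) * ((1 + 'X) ^+ `|flm1 k|%N) in
  forall psi : {poly R}, inP s psi ->
    (forall phi : {poly R}, inP s phi -> I (w * psi * phi) = 0) ->
    psi = 0.

(* R^d-valued polynomials are represented componentwise: 'I_d -> {poly R} *)
Definition Nmap (I : {poly R} -> R) (d r k : nat) (psi : 'I_d -> {poly R}) : R :=
  \sum_(i < pos_part (flm1 k)) enorm (fun j => (psi j)^`(i).[-1])
  + \sum_(i < pos_part (fl0 k)) enorm (fun j => (psi j)^`(i).[1])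
  + \sum_((k == 0)%N <= i < (r - k).+1)
       enorm (fun j => I (psi j * (1 + 'X) ^+ i)).

Definition is_norm_on (d : nat) (P : ('I_d -> {poly R}) -> Prop)
  (N : ('I_d -> {poly R}) -> R) : Prop :=
  [/\ (forall p, P p -> 0 <= N p),
      (forall p, P p -> N p = 0 -> forall j, p j = 0),
      (forall (a : R) p, P p -> N (fun j => a *: p j) = `|a| * N p) &
      (forall p q, P p -> P q -> N (fun j => p j + q j) <= N p + N q)].
End Defs.

From HB Require Import structures.
From mathcomp Require Import all_boot all_order all_algebra.
From mathcomp Require Import reals.
From mathcomp Require Import zify ring lra.
Set Implicit Arguments. Unset Strict Implicit. Unset Printing Implicit Defensive.
Import Order.TTheory GRing.Theory Num.Theory.
Local Open Scope ring_scope.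

(* The map N = Nmap is a sum of terms enorm (L_i psi), where every L_i is a
   linear functional on scalar polynomials applied componentwise: the
   derivative evaluations p |-> p^(i)(-1), p |-> p^(i)(1) and the moments
   p |-> I[p (1+t)^i].  Any such sum is a seminorm, since the Euclidean norm
   is one (its triangle inequality comes from Cauchy-Schwarz); a sum of
   seminorms is a seminorm.  Definiteness reduces, component by component,
   to unisolvence: a scalar p of degree <= r-1 annihilated by all the L_i is
   zero.  For k > 0 the boundary conditions give the factorization
   p = (1+t)^A (t-1)^B q with A = floor((k-1)/2), B = floor(k/2), so that
   w q = +-p for the weight w of (A1); the moment conditions then say that
   I[w q phi] = 0 for every phi in the span of the (1+t)^i, i.e. for every
   phi of degree <= r-k, and (A1) forces q = 0.  For k = 0 there are no
   boundary conditions, w = 1+t, and the same argument applies to q = p. *)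

Lemma flm1_pos (k : nat) : (0 < k)%N -> flm1 k = ((k.-1) %/ 2)%N.
Proof.
move=> k_gt0; rewrite /flm1.
have -> : k%:Z - 1 = (k.-1)%:Z by rewrite -[in LHS](prednK k_gt0) -addn1 PoszD addrK.
by rewrite divz_nat.
Qed.

Lemma fl0_nat (k : nat) : fl0 k = (k %/ 2)%N.
Proof. by rewrite /fl0 divz_nat. Qed.

Section LinearFunctionals.
Variable R : realType.

Definition lin_functional (L : {poly R} -> R) : Prop :=
  forall (a : R) (p q : {poly R}), L (a *: p + q) = a * L p + L q.

Lemma lin_functional0 L : lin_functional L -> L 0 = 0.
Proof.
move=> Llin; have := Llin 1 0 0; rewrite scaler0 addr0 mul1r => /eqP.
by rewrite -subr_eq0 opprD addrA subrr sub0r oppr_eq0 => /eqP.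
Qed.

Lemma lin_functionalZ L a p : lin_functional L -> L (a *: p) = a * L p.
Proof. by move=> Llin; rewrite -[a *: p]addr0 Llin lin_functional0 // addr0. Qed.

Lemma lin_functionalD L p q : lin_functional L -> L (p + q) = L p + L q.
Proof. by move=> Llin; have := Llin 1 p q; rewrite scale1r mul1r. Qed.

Lemma lin_functional_derivn_horner (i : nat) (c : R) :
  lin_functional (fun p => p^`(i).[c]).
Proof. by move=> a p q; rewrite derivnD derivnZ hornerD hornerZ. Qed.

Lemma lin_functional_mulr L (u : {poly R}) :
  lin_functional L -> lin_functional (fun p => L (p * u)).
Proof. by move=> Llin a p q; rewrite mulrDl -scalerAl Llin. Qed.

Lemma lin_functional_mull L (u : {poly R}) :
  lin_functional L -> lin_functional (fun p => L (u * p)).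
Proof. by move=> Llin a p q; rewrite mulrDr -scalerAr Llin. Qed.

(* 1+t written as the linear factor t-(-1), to use the XsubC library. *)
Lemma onePX : (1 + 'X : {poly R}) = 'X - (-1)%:P.
Proof. by rewrite polyCN opprK addrC. Qed.

(* The powers (1+t)^i, i < n, span the polynomials of degree < n, so a
   linear functional vanishing on them vanishes on all of P_{n-1}. *)
Lemma lin_functional_shifted_span L n :
  lin_functional L -> (forall i, (i < n)%N -> L ((1 + 'X) ^+ i) = 0) ->
  forall phi : {poly R}, (size phi <= n)%N -> L phi = 0.
Proof.
move=> Llin; elim: n => [|n IH] Lvan phi.
  by rewrite leqn0 size_poly_eq0 => /eqP ->; apply: lin_functional0.
move=> size_phi; set e := (1 + 'X : {poly R}) ^+ n.
have size_e : size e = n.+1 by rewrite /e onePX size_exp_XsubC.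
have lead_e : e`_n = 1.
  have /monicP : e \is monic by rewrite /e onePX monic_exp // monicXsubC.
  by rewrite /lead_coef size_e.
rewrite -(subrK (phi`_n *: e) phi) addrC Llin Lvan // mulr0 add0r.
apply: IH => [i lt_in|]; first by apply: Lvan; apply: ltnW.
apply/leq_sizeP => j le_nj; rewrite coefB coefZ.
have [lt_nj|le_jn] := ltnP n j; last first.
  have -> : j = n by apply/eqP; rewrite eqn_leq le_jn le_nj.
  by rewrite lead_e mulr1 subrr.
rewrite [phi`_j]nth_default ?[e`_j]nth_default ?size_e ?mulr0 ?subrr //.
exact: leq_trans size_phi lt_nj.
Qed.

End LinearFunctionals.

Section BoundaryZeros.
Variable R : realType.

Lemma derivn_XsubC_mul (c : R) (q : {poly R}) n :
  (('X - c%:P) * q)^`(n.+1) = ('X - c%:P) * q^`(n.+1) + q^`(n) *+ n.+1.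
Proof.
elim: n => [|n IH].
  by rewrite derivn1 derivM derivXsubC mul1r derivn0 derivn1 addrC.
rewrite derivnS IH derivD derivM derivXsubC mul1r derivMn -!derivnS.
by rewrite [in RHS]mulrS addrA [q^`(n.+1) + _]addrC -addrA.
Qed.

(* A zero of order m (vanishing derivatives of order < m) gives a factor
   (t-c)^m; this uses characteristic 0 through the factor n+1 above. *)
Lemma vanishing_derivn_dvdp (c : R) m (p : {poly R}) :
  (forall i, (i < m)%N -> p^`(i).[c] = 0) -> ('X - c%:P) ^+ m %| p.
Proof.
elim: m p => [|m IH] p van; first by rewrite expr0 dvd1p.
have /factor_theorem [q p_eq] : root p c by rewrite /root -[p]derivn0 van.
rewrite p_eq in van *; rewrite exprSr dvdp_mul //; apply: IH => i lt_im.
have := van i.+1 lt_im; rewrite mulrC derivn_XsubC_mul hornerD hornerM.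
rewrite hornerXsubC subrr mul0r add0r hornerMn => /eqP.
by rewrite mulrn_eq0 /= => /eqP.
Qed.

Lemma boundary_zeros_factor (A B : nat) (p : {poly R}) :
  (forall i, (i < A)%N -> p^`(i).[-1] = 0) ->
  (forall i, (i < B)%N -> p^`(i).[1] = 0) ->
  exists q, p = q * (('X - (-1)%:P) ^+ A * ('X - 1%:P) ^+ B).
Proof.
move=> vanA vanB.
have coprime_AB : coprimep (('X - (-1)%:P) ^+ A) (('X - (1 : R)%:P) ^+ B).
  apply/coprimep_expl/coprimep_expr/coprimep_XsubC2.
  by rewrite opprK; apply/negP => /eqP; lra.
have : ('X - (-1)%:P) ^+ A * ('X - 1%:P) ^+ B %| p.
  by rewrite Gauss_dvdp // !vanishing_derivn_dvdp.
by case/dvdpP => q ->; exists q.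
Qed.

End BoundaryZeros.

Section Unisolvence.
Variables (R : realType) (I : {poly R} -> R) (r k : nat).
Hypotheses (I_linear : lin_functional I) (le_kr : (k <= r)%N) (HA1 : A1 I r k).

Definition annihilated (p : {poly R}) : Prop :=
  [/\ forall i, (i < pos_part (flm1 k))%N -> p^`(i).[-1] = 0,
      forall i, (i < pos_part (fl0 k))%N -> p^`(i).[1] = 0 &
      forall i, ((k == 0)%N <= i < (r - k).+1)%N -> I (p * (1 + 'X) ^+ i) = 0].

(* Case k = 0: the weight of (A1) is 1+t, and the moments of order 1..r
   of p are those of order 0..r-1 of (1+t) p. *)
Lemma unisolvence_k0 (p : {poly R}) :
  k = 0%N -> (size p <= r)%N -> annihilated p -> p = 0.
Proof.
move=> k0 size_p [_ _ van_mom]; subst k.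
apply: HA1 => [|phi]; rewrite /inP; first by lia.
move=> size_phi.
apply: (@lin_functional_shifted_span _
  (fun phi => I ((1 - 'X) ^+ 0 * (1 + 'X) ^+ 1 * p * phi)) r).
- exact: lin_functional_mull.
- move=> i lt_ir; have -> : (1 - 'X) ^+ 0 * (1 + 'X) ^+ 1 * p * (1 + 'X) ^+ i
      = p * (1 + 'X) ^+ i.+1 by rewrite expr0 expr1 exprS; ring.
  by apply: van_mom; rewrite eqxx; lia.
- by lia.
Qed.

(* Case k > 0: factor p = q (1+t)^A (t-1)^B; then w q = (-1)^B p, so the
   moments of p are, up to sign, the values of q |-> I[w q phi]. *)
Lemma unisolvence_kpos (p : {poly R}) :
  (0 < k)%N -> (size p <= r)%N -> annihilated p -> p = 0.
Proof.
move=> k_gt0 size_p [vanA vanB van_mom].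
set A := ((k.-1) %/ 2)%N; set B := (k %/ 2)%N.
have AB : (A + B = k.-1)%N by rewrite /A /B; lia.
have eA : pos_part (flm1 k) = A by rewrite flm1_pos.
have eA' : `|flm1 k|%N = A by rewrite flm1_pos.
have eB : pos_part (fl0 k) = B by rewrite fl0_nat.
rewrite eA in vanA; rewrite eB in vanB; clearbody A B.
have [q p_eq] := boundary_zeros_factor vanA vanB.
suff q0 : q = 0 by rewrite p_eq q0 mul0r.
have size_q : (size q + k.-1 <= r)%N.
  have [->|q_neq0] := eqVneq q 0; first by rewrite size_poly0; lia.
  have nzA : ('X - (-1 : R)%:P) ^+ A != 0 by rewrite -size_poly_eq0 size_exp_XsubC.
  have nzB : ('X - (1 : R)%:P) ^+ B != 0 by rewrite -size_poly_eq0 size_exp_XsubC.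
  move: size_p; rewrite p_eq !size_mul ?mulf_neq0 // !size_exp_XsubC.
  have : (0 < size q)%N by rewrite size_poly_gt0.
  rewrite -AB; set s := size q; lia.
have weight_q i : (1 - 'X) ^+ B * (1 + 'X) ^+ A * q * (1 + 'X) ^+ i
    = (-1) ^+ B *: (p * (1 + 'X) ^+ i).
  have sgn : ((-1 : R) ^+ B)%:P = (-1) ^+ B by rewrite polyC_exp polyCN.
  have -> : (1 - 'X : {poly R}) = - ('X - 1%:P) by rewrite polyC1 opprB.
  by rewrite p_eq onePX -mul_polyC sgn [(- ('X - _)) ^+ B]exprNn; ring.
apply: HA1 => [|phi]; rewrite /inP; first by move: size_q; set s := size q; lia.
rewrite eB eA' => size_phi.
apply: (@lin_functional_shifted_span _
  (fun phi => I ((1 - 'X) ^+ B * (1 + 'X) ^+ A * q * phi)) (r - k).+1).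
- exact: lin_functional_mull.
- move=> i lt_i; rewrite weight_q lin_functionalZ // van_mom ?mulr0 //.
  by rewrite eqn0Ngt k_gt0.
- by lia.
Qed.

Lemma unisolvence (p : {poly R}) : (size p <= r)%N -> annihilated p -> p = 0.
Proof.
by case: (posnP k) => [k0|k_gt0]; [apply: unisolvence_k0 | apply: unisolvence_kpos].
Qed.

End Unisolvence.

Section EuclideanNorm.
Variables (R : realType) (d : nat).
Implicit Types u v : 'I_d -> R.

Lemma enorm_ge0 u : 0 <= enorm u.
Proof. exact: sqrtr_ge0. Qed.

Lemma eq_enorm u v : (forall j, u j = v j) -> enorm u = enorm v.
Proof. by move=> eq_uv; congr Num.sqrt; apply: eq_bigr => j _; rewrite eq_uv. Qed.

Lemma enorm_eq0 u : enorm u = 0 -> forall j, u j = 0.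
Proof.
move=> /eqP; rewrite sqrtr_eq0 => sum_le0 j.
have sum0 : \sum_(j < d) u j ^+ 2 = 0.
  by apply/eqP; rewrite eq_le sum_le0 sumr_ge0 // => i _; rewrite sqr_ge0.
have := psumr_eq0P (P := predT) (fun i _ => sqr_ge0 (u i)) sum0 (isT : predT j).
by move/eqP; rewrite sqrf_eq0 => /eqP.
Qed.

Lemma enormZ (a : R) u : enorm (fun j => a * u j) = `|a| * enorm u.
Proof.
rewrite /enorm -sqrtr_sqr -sqrtrM ?sqr_ge0 // mulr_sumr.
by congr Num.sqrt; apply: eq_bigr => j _; rewrite exprMn.
Qed.

(* Cauchy-Schwarz, via Lagrange's identity: the defect is the sum of the
   squares (u_i v_j - u_j v_i)^2. *)
Lemma cauchy_schwarz u v :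
  (\sum_(j < d) u j * v j) ^+ 2 <= (\sum_(j < d) u j ^+ 2) * (\sum_(j < d) v j ^+ 2).
Proof.
set A := \sum_(j < d) u j ^+ 2; set B := \sum_(j < d) v j ^+ 2.
set C := \sum_(j < d) u j * v j.
have double_sum (F G : 'I_d -> R) :
    \sum_(i < d) \sum_(j < d) F i * G j = (\sum_(i < d) F i) * \sum_(j < d) G j.
  by rewrite mulr_suml; apply: eq_bigr => i _; rewrite mulr_sumr.
have lagrange : \sum_(i < d) \sum_(j < d) (u i * v j - u j * v i) ^+ 2
    = A * B + B * A - 2 * C ^+ 2.
  rewrite /A /B /C expr2 -!double_sum mulr_sumr -big_split -sumrB.
  apply: eq_bigr => i _; rewrite mulr_sumr -big_split -sumrB.
  by apply: eq_bigr => j _ /=; ring.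
have : 0 <= \sum_(i < d) \sum_(j < d) (u i * v j - u j * v i) ^+ 2.
  by apply: sumr_ge0 => i _; apply: sumr_ge0 => j _; rewrite sqr_ge0.
rewrite lagrange; lra.
Qed.

(* Triangle inequality, from Cauchy-Schwarz: |u+v|^2 = |u|^2 + |v|^2 + 2 u.v. *)
Lemma enormD u v : enorm (fun j => u j + v j) <= enorm u + enorm v.
Proof.
have hu := enorm_ge0 u; have hv := enorm_ge0 v.
have hw := enorm_ge0 (fun j => u j + v j).
set C := \sum_(j < d) u j * v j.
have C_le : C <= enorm u * enorm v.
  rewrite /enorm -sqrtrM; last by apply: sumr_ge0 => i _; rewrite sqr_ge0.
  apply: (le_trans (ler_norm C)); rewrite -sqrtr_sqr ler_sqrt ?cauchy_schwarz //.
  by apply: mulr_ge0; apply: sumr_ge0 => i _; rewrite sqr_ge0.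
have sqr_w : enorm (fun j => u j + v j) ^+ 2 = enorm u ^+ 2 + enorm v ^+ 2 + 2 * C.
  rewrite /enorm !sqr_sqrtr; try by apply: sumr_ge0 => i _; rewrite sqr_ge0.
  rewrite /C mulr_sumr -!big_split; apply: eq_bigr => j _ /=; ring.
nra.
Qed.

End EuclideanNorm.

Section Seminorms.
Variables (R : realType) (d : nat).

Definition seminorm (N : ('I_d -> {poly R}) -> R) : Prop :=
  [/\ forall p, 0 <= N p,
      forall (a : R) p, N (fun j => a *: p j) = `|a| * N p &
      forall p q, N (fun j => p j + q j) <= N p + N q].

Lemma seminormD N1 N2 :
  seminorm N1 -> seminorm N2 -> seminorm (fun p => N1 p + N2 p).
Proof.
move=> [ge0_1 Z1 D1] [ge0_2 Z2 D2]; split=> [p|a p|p q].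
- exact: addr_ge0.
- by rewrite Z1 Z2 mulrDr.
- by rewrite addrACA lerD.
Qed.

Lemma seminorm_sum_enorm (T : Type) (s : seq T) (P : pred T)
    (L : T -> {poly R} -> R) :
  (forall i, lin_functional (L i)) ->
  seminorm (fun psi => \sum_(i <- s | P i) enorm (fun j => L i (psi j))).
Proof.
move=> Llin; split=> [p|a p|p q].
- by apply: sumr_ge0 => i _; apply: enorm_ge0.
- rewrite mulr_sumr; apply: eq_bigr => i _; rewrite -enormZ.
  by apply: eq_enorm => j; rewrite lin_functionalZ.
- rewrite -big_split; apply: ler_sum => i _ /=.
  rewrite (@eq_enorm _ _ _ (fun j => L i (p j) + L i (q j))) ?enormD // => j.
  exact: lin_functionalD.
Qed.

Lemma sum_enorm_eq0 (T : eqType) (s : seq T) (P : pred T)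
    (L : T -> {poly R} -> R) (psi : 'I_d -> {poly R}) :
  \sum_(i <- s | P i) enorm (fun j => L i (psi j)) = 0 ->
  forall i, i \in s -> P i -> forall j, L i (psi j) = 0.
Proof.
move/eqP; rewrite psumr_eq0 => [/allP van i i_s Pi|i _]; last exact: enorm_ge0.
by apply: enorm_eq0; apply/eqP; move: (van i i_s); rewrite Pi.
Qed.

End Seminorms.

Section NmapProperties.
Variables (R : realType) (I : {poly R} -> R) (d r k : nat).
Hypothesis I_linear : lin_functional I.

Lemma seminorm_Nmap : seminorm (@Nmap R I d r k).
Proof.
apply: seminormD; first apply: seminormD.
- exact: (@seminorm_sum_enorm R d 'I_(pos_part (flm1 k)) _ xpredT
    (fun i p => p^`(i).[-1]) (fun i => lin_functional_derivn_horner i (-1))).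
- exact: (@seminorm_sum_enorm R d 'I_(pos_part (fl0 k)) _ xpredT
    (fun i p => p^`(i).[1]) (fun i => lin_functional_derivn_horner i 1)).
- exact: (@seminorm_sum_enorm R d nat _ xpredT
    (fun i p => I (p * (1 + 'X) ^+ i)) (fun i => lin_functional_mulr _ I_linear)).
Qed.

Lemma Nmap_eq0_annihilated (psi : 'I_d -> {poly R}) :
  @Nmap R I d r k psi = 0 -> forall j, annihilated I r k (psi j).
Proof.
move=> /eqP; rewrite /Nmap !paddr_eq0 ?addr_ge0 ?sumr_ge0 //;
  try by move=> *; apply: enorm_ge0.
case/andP => /andP [/eqP van_m1 /eqP van_1] /eqP van_mom j; split.
- move=> i lt_i; exact: (sum_enorm_eq0 (L := fun (i : 'I__) p => p^`(i).[-1]) van_m1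
    (mem_index_enum (Ordinal lt_i)) isT).
- move=> i lt_i; exact: (sum_enorm_eq0 (L := fun (i : 'I__) p => p^`(i).[1]) van_1
    (mem_index_enum (Ordinal lt_i)) isT).
- move=> i range_i; apply: (sum_enorm_eq0 (L := fun i p => I (p * (1 + 'X) ^+ i))
    van_mom _ isT); by rewrite mem_index_iota.
Qed.

End NmapProperties.

Theorem mainTheorem2 (R : realType) (d r k : nat) (I : {poly R} -> R)
  (I_linear : forall (a : R) (p q : {poly R}), I (a *: p + q) = a * I p + I q)
  (Hk : (k <= r)%N) (HA1 : A1 I r k) :
  is_norm_on (fun psi : 'I_d -> {poly R} => forall j, inP (r%:Z - 1) (psi j))
             (@Nmap R I d r k).
Proof.
have [N_ge0 N_Z N_D] := seminorm_Nmap d r k I_linear.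
split=> [p _|p in_P N0 j|a p _|p q _ _]; [exact: N_ge0 | | exact: N_Z | exact: N_D].
have size_pj : (size (p j) <= r)%N by move: (in_P j); rewrite /inP; lia.
exact: (unisolvence I_linear Hk HA1 size_pj (Nmap_eq0_annihilated N0 j)).
Qed.
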